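(* Let $G$ be a compactly generated tdlc group, $\Gamma$ a Cayley–Abels graph for $G$, and $\mathcal{C}$ a nonempty chain (set totally ordered by inclusion) of closed normal subgroups of $G$. (1) Let $H=\overline{\bigcup_{N\in\mathcal{C}}N}$. Then $\mathrm{val}(H\backslash\Gamma)=\min\{\mathrm{val}(N\backslash\Gamma): N\in\mathcal{C}\}$. (2) Let $H'=\bigcap_{N\in\mathcal{C}}N$. Then $\mathrm{val}(H'\backslash\Gamma)=\max\{\mathrm{val}(N\backslash\Gamma): N\in\mathcal{C}\}$.
   Context: A Cayley–Abels graph for a tdlc group $G$ is a locally finite, connected simple graph together with a vertex-transitive action of $G$ by graph automorphisms with compact open vertex stabilizers. For a normal subgroup $N\trianglelefteq G$, the quotient graph $N\backslash\Gamma$ has as vertices the $N$-orbits $N\alpha$ on $\mathbf{V}\Gamma$, and two distinct orbits $N\alpha\ne N\beta$ are adjacent iff some $\alpha'\in N\alpha$ is adjacent in $\Gamma$ to some $\beta'\in N\beta$. Since $G$ acts vertex-transitively on $N\backslash\Gamma$, all its vertices have the same number of neighbours, denoted $\mathrm{val}(N\backslash\Gamma)$. *)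

From HB Require Import structures.
From Stdlib Require Import Relations.
From mathcomp Require Import all_boot monoid.
From mathcomp Require Import all_classical all_reals topology.
Set Implicit Arguments. Unset Strict Implicit. Unset Printing Implicit Defensive.
Local Open Scope classical_set_scope.

#[short(type="topGroupCarrierType")]
HB.structure Definition TopGroupCarrier := {G of Group G & Topological G}.

Notation gmul := (@monoid.mul _).
Notation gone := (@monoid.one _).
Notation ginv := (@monoid.inv _).

Definition topological_group (G : topGroupCarrierType) : Prop :=
  continuous (fun p : G * G => gmul p.1 p.2) /\ continuous (fun g : G => ginv g).

Definition is_subgroup (G : topGroupCarrierType) (H : set G) : Prop :=
  H gone /\ (forall x y, H x -> H y -> H (gmul x y)) /\ (forall x, H x -> H (ginv x)).

Definition is_normal (G : topGroupCarrierType) (N : set G) : Prop :=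
  is_subgroup N /\ forall g n, N n -> N (gmul (ginv g) (gmul n g)).

Definition closed_normal (G : topGroupCarrierType) (N : set G) : Prop :=
  is_normal N /\ closed N.

Definition tdlc (G : topGroupCarrierType) : Prop :=
  [/\ topological_group G, hausdorff_space G, locally_compact [set: G]
    & totally_disconnected [set: G]].

Definition compactly_generated (G : topGroupCarrierType) : Prop :=
  exists K : set G, compact K /\
    forall H : set G, is_subgroup H -> K `<=` H -> H = setT.

Definition cayley_abels (G : topGroupCarrierType) (V : Type)
    (adj : V -> V -> Prop) (act : G -> V -> V) : Prop :=
  [/\
      ((forall v w, adj v w -> adj w v) /\ (forall v, ~ adj v v)),
      (forall v, finite_set [set w | adj v w]),
      (forall v w, clos_refl_trans V adj v w),
      ((forall v, act gone v = v) /\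
       (forall g h v, act (gmul g h) v = act g (act h v)) /\
       (forall g v w, adj v w <-> adj (act g v) (act g w)))
    & ((forall v w, exists g, act g v = w) /\
      (forall v, compact [set g | act g v = v] /\ open [set g | act g v = v]))].

Definition orbit (G : topGroupCarrierType) (V : Type) (act : G -> V -> V)
    (N : set G) (v : V) : set V := [set act n v | n in N].

(* neighbours of the vertex N v in the quotient graph N \ Gamma *)
Definition quot_nbrs (G : topGroupCarrierType) (V : Type) (adj : V -> V -> Prop)
    (act : G -> V -> V) (N : set G) (v : V) : set (set V) :=
  [set O | (exists w, O = orbit act N w) /\ O <> orbit act N v /\
           exists a b, orbit act N v a /\ O b /\ adj a b].

(* val(N \ Gamma), computed at the vertex N v (the number of neighbours;    *)
(* this set is always finite for a Cayley-Abels graph).                      *)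
Definition qval (G : topGroupCarrierType) (V : Type) (adj : V -> V -> Prop)
    (act : G -> V -> V) (N : set G) (v : V) : nat :=
  xget 0%N [set n : nat | (quot_nbrs adj act N v #= `I_n)%card].

From Pilot Require Import Defs.
From HB Require Import structures.
From Stdlib Require Import Relations.
From mathcomp Require Import all_boot monoid.
From mathcomp Require Import all_classical all_reals topology.
Local Open Scope classical_set_scope.

(* The neighbours of [H v] in [H \ Gamma] are determined by which pairs of
   vertices in the closed ball B of radius 1 around [v] lie in a common
   [H]-orbit, and a coarser orbit relation on B gives fewer neighbours.  Since
   B x B is finite, the orbit relation on B stabilises along the chain.  For
   the union, each related pair of B is related by some member of the chain,
   hence all of them by a single member; passing to the closure changes no
   orbit since stabilisers are open.  For the intersection, each unrelated pair
   of B is unrelated for some member: the cosets of a stabiliser are compact,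
   so a pair related by every member is related by the intersection. *)

Lemma chain_finite_subset_bigcup (I T : Type) (C : set I) (F : I -> set T)
    (X : set T) :
  C !=set0 -> (forall i j, C i -> C j -> F i `<=` F j \/ F j `<=` F i) ->
  finite_set X -> X `<=` \bigcup_(i in C) F i -> exists2 i, C i & X `<=` F i.
Proof.
move=> [i0 Ci0] chainC /(@finite_seqP {classic T})[s ->].
elim: s => [|x s IHs] sub_s; first by exists i0.
have [i Ci sFi] : exists2 i, C i & [set` s] `<=` F i.
  by apply: IHs => y ys; apply: sub_s; rewrite /= inE ys orbT.
have [j Cj Fjx] := sub_s x (mem_head x s).
have sub_cons k : F i `<=` F k -> F k x -> [set` x :: s] `<=` F k.
  by move=> ik Fkx y; rewrite /= inE => /orP[/eqP-> // | ys]; apply/ik/sFi.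
case: (chainC i j Ci Cj) => [ij|ji].
- by exists j => //; apply: sub_cons.
- by exists i => //; apply: sub_cons => //; apply: ji.
Qed.

Lemma compact_meets_bigcap_chain {T : topologicalType} {C : set (set T)}
    {K : set T} :
  compact K -> C !=set0 -> (forall A, C A -> closed A) ->
  (forall A B, C A -> C B -> A `<=` B \/ B `<=` A) ->
  (forall A, C A -> K `&` A !=set0) -> K `&` \bigcap_(A in C) A !=set0.
Proof.
move=> cK [A0 CA0] closedC chainC meetK.
pose F := filter_from C (fun A => K `&` A).
have F_filter : ProperFilter F.
  apply: filter_from_proper; last by move=> A CA; exact: meetK.
  apply: filter_from_filter; first by exists A0.
  move=> A B CA CB; case: (chainC A B CA CB) => [AB|BA].
  - by exists A => // x [Kx Ax]; split; split => //; exact: AB.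
  - by exists B => // x [Kx Bx]; split; split => //; exact: BA.
have [p [Kp clusterFp]] : exists p, K p /\ cluster F p.
  by apply: cK; exists A0 => // x [].
exists p; split => // A CA; apply: closedC => // B Bp.
have FKA : F (K `&` A) by exists A.
have [x [[_ Ax] Bx]] := clusterFp _ _ FKA Bp.
by exists x.
Qed.

Section GroupAction.
Variables (G : topGroupCarrierType) (V : Type) (act : G -> V -> V).
Hypothesis act1 : forall v, act gone v = v.
Hypothesis actM : forall g h v, act (gmul g h) v = act g (act h v).

Local Notation orbit := (Defs.orbit act).

Lemma actVK g v : act (ginv g) (act g v) = v.
Proof. by rewrite -actM mulVg act1. Qed.

Lemma orbit_refl (N : set G) v : is_subgroup N -> orbit N v v.
Proof. by case=> N1 _; exists gone. Qed.

Lemma orbit_eq {N : set G} {v w} : is_subgroup N ->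
  orbit N v w -> orbit N v = orbit N w.
Proof.
case=> N1 [NM NV] [n Nn <-]; apply/seteqP; split => _ [m Nm <-].
- by exists (gmul m (ginv n)); [apply: NM; last apply: NV | rewrite actM actVK].
- by exists (gmul m n); [apply: NM | rewrite actM].
Qed.

Lemma orbit_subset {N M : set G} {v w} : N `<=` M -> orbit N v w -> orbit M v w.
Proof. by move=> NM [n Nn <-]; exists n => //; apply: NM. Qed.

Lemma is_subgroup_bigcup_chain {C : set (set G)} :
  C !=set0 -> (forall N, C N -> is_subgroup N) ->
  (forall N M, C N -> C M -> N `<=` M \/ M `<=` N) ->
  is_subgroup (\bigcup_(N in C) N).
Proof.
move=> [N0 CN0] subC chainC; split.
  by exists N0 => //; case: (subC N0 CN0).
split; last first.
  by move=> x [N CN Nx]; exists N => //; case: (subC N CN) => _ [_]; apply.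
move=> x y [N CN Nx] [M CM My].
have mulM K : C K -> N `<=` K -> M `<=` K -> (\bigcup_(N in C) N) (gmul x y).
  by move=> CK NK MK; exists K => //; case: (subC K CK) => _ [+ _]; apply; auto.
by case: (chainC N M CN CM) => [NM|MN]; [apply: (mulM M) | apply: (mulM N)].
Qed.

Lemma is_subgroup_bigcap {C : set (set G)} :
  (forall N, C N -> is_subgroup N) -> is_subgroup (\bigcap_(N in C) N).
Proof.
move=> subC; split; first by move=> N /subC[].
split=> [x y Cx Cy|x Cx] N CN; have [_ [NM NV]] := subC N CN.
- by apply: NM; [apply: Cx | apply: Cy].
- by apply: NV; apply: Cx.
Qed.

Lemma qval_orbit_ext adj (N M : set G) v :
  orbit N = orbit M -> qval adj act N v = qval adj act M v.
Proof. by rewrite /qval /quot_nbrs => ->. Qed.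

Lemma qvalE {adj} {N : set G} {v n} :
  (quot_nbrs adj act N v #= `I_n)%card -> qval adj act N v = n.
Proof.
move=> nbrs_n; apply: xget_unique => // m nbrs_m.
have : (`I_m #= `I_n)%card by apply: card_eq_trans nbrs_n; rewrite card_eq_sym.
rewrite card_eq_le !card_le_II => /andP[mn nm].
by apply/eqP; rewrite eqn_leq mn.
Qed.

Variable adj : V -> V -> Prop.
Hypothesis adj_act : forall g v w, adj v w <-> adj (act g v) (act g w).
Hypothesis adj_finite : forall v, finite_set (adj v).

Lemma quot_nbrsE {N : set G} v : is_subgroup N ->
  quot_nbrs adj act N v = orbit N @` [set w | adj v w /\ ~ orbit N v w].
Proof.
move=> HN; apply/seteqP; split.
- move=> _ [[w0 ->]] [Nv_neq [a [b [[n Nn <-] [Nw0b vb]]]]].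
  have Nn' : N (ginv n) by case: HN => _ [_]; apply.
  exists (act (ginv n) b); last first.
    by rewrite (orbit_eq HN Nw0b); apply/esym/orbit_eq => //; exists (ginv n).
  split; first by rewrite (adj_act (ginv n)) actVK in vb.
  move=> Nvb; apply: Nv_neq; rewrite (orbit_eq HN Nw0b) (orbit_eq HN Nvb).
  by apply/esym/orbit_eq => //; exists n; rewrite // -actM mulgV act1.
- move=> _ [w [vw Nvw] <-]; split; first by exists w.
  split; first by move=> Nwv; apply: Nvw; rewrite -Nwv; exact: orbit_refl.
  by exists v, w; do !split => //; exact: orbit_refl.
Qed.

Lemma finite_quot_nbrs {N : set G} v : is_subgroup N ->
  finite_set (quot_nbrs adj act N v).
Proof.
move=> HN; rewrite quot_nbrsE //; apply: finite_image.
by apply: sub_finite_set (adj_finite v) => w [].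
Qed.

Lemma qval_le (N M : set G) v : is_subgroup N -> is_subgroup M ->
  (forall a b, (v |` adj v) a -> (v |` adj v) b ->
     orbit N a b -> orbit M a b) ->
  (qval adj act M v <= qval adj act N v)%N.
Proof.
move=> HN HM NM_ball.
have /finite_setP[n nbrsN] := finite_quot_nbrs v HN.
have /finite_setP[m nbrsM] := finite_quot_nbrs v HM.
rewrite (qvalE nbrsN) (qvalE nbrsM).
pose coarsen (O : set V) := \bigcup_(w in O `&` (v |` adj v)) orbit M w.
have nbrsM_sub : quot_nbrs adj act M v `<=` coarsen @` quot_nbrs adj act N v.
  rewrite (quot_nbrsE v HM) (quot_nbrsE v HN) => _ [w [vw Mvw] <-].
  exists (orbit N w).
    by exists w => //; split => // Nvw; apply/Mvw/NM_ball => //; [left | right].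
  apply/seteqP; split => [u [w' [Nww' ballw'] Mw'u] | u Mwu].
  - by rewrite (orbit_eq HM (NM_ball _ _ (or_intror vw) ballw' Nww')).
  - by exists w => //; split; [exact: orbit_refl | right].
rewrite -card_le_II -(card_le_eql nbrsM) -(card_le_eqr nbrsN).
exact: card_le_trans (subset_card_le nbrsM_sub) (card_image_le _ _).
Qed.

Lemma qval_antimono (N M : set G) v : is_subgroup N -> is_subgroup M ->
  N `<=` M -> (qval adj act M v <= qval adj act N v)%N.
Proof.
by move=> HN HM NM; apply: qval_le => // a b _ _; exact: orbit_subset.
Qed.

Lemma finite_ball_pairs v : finite_set ((v |` adj v) `*` (v |` adj v)).
Proof.
have ball_fin : finite_set (v |` adj v) by rewrite finite_setU; split.
exact: finite_setX.
Qed.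

Section Chain.
Variable C : set (set G).
Hypothesis C_neq0 : C !=set0.
Hypothesis C_subgroup : forall N, C N -> is_subgroup N.
Hypothesis C_chain : forall N M, C N -> C M -> N `<=` M \/ M `<=` N.

Lemma qval_bigcup_chain v :
  exists2 N, C N & qval adj act (\bigcup_(N in C) N) v = qval adj act N v.
Proof.
pose U := \bigcup_(N in C) N.
have [N CN U_N] : exists2 N, C N & (v |` adj v) `*` (v |` adj v) `&`
    [set p | orbit U p.1 p.2] `<=` [set p | orbit N p.1 p.2].
  apply: chain_finite_subset_bigcup => //.
  - move=> N M CN CM; case: (C_chain N M CN CM) => NM; [left | right];
      by move=> p; exact: orbit_subset.
  - exact/finite_setIl/finite_ball_pairs.
  - by move=> p [_ [g [M CM Mg] gp]]; exists M => //; exists g.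
have HU : is_subgroup U := is_subgroup_bigcup_chain C_neq0 C_subgroup C_chain.
exists N => //; apply/anti_leq/andP; split.
- by apply: qval_antimono => //; [exact: C_subgroup | exact: bigcup_sup].
- apply: qval_le => [||a b va vb Uab] //; first exact: C_subgroup.
  exact: (U_N (a, b) (conj (conj va vb) Uab)).
Qed.

Lemma qval_bigcap_chain v :
  (forall a b,
     (forall N, C N -> orbit N a b) -> orbit (\bigcap_(N in C) N) a b) ->
  exists2 N, C N & qval adj act (\bigcap_(N in C) N) v = qval adj act N v.
Proof.
move=> orbit_bigcap; pose K := \bigcap_(N in C) N.
have [N CN nK_nN] : exists2 N, C N & (v |` adj v) `*` (v |` adj v) `&`
    [set p | ~ orbit K p.1 p.2] `<=` [set p | ~ orbit N p.1 p.2].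
  apply: chain_finite_subset_bigcup => //.
  - move=> N M CN CM; case: (C_chain N M CN CM) => NM; [right | left];
      by move=> p nMp /(orbit_subset NM).
  - exact/finite_setIl/finite_ball_pairs.
  - move=> p [_ nKp]; apply: contrapT => nNp; apply/nKp/orbit_bigcap => N CN.
    by apply: contrapT => ?; apply: nNp; exists N.
have HK : is_subgroup K := is_subgroup_bigcap C_subgroup.
exists N => //; apply/anti_leq/andP; split.
- apply: qval_le => [||a b va vb Nab] //; first exact: C_subgroup.
  by apply: contrapT => nKab; exact: (nK_nN (a, b) (conj (conj va vb) nKab)).
- by apply: qval_antimono => //; [exact: C_subgroup | exact: bigcap_inf].
Qed.

End Chain.
End GroupAction.

Section ContinuousAction.
Variables (G : topGroupCarrierType) (V : Type) (act : G -> V -> V).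
Hypothesis act1 : forall v, act gone v = v.
Hypothesis actM : forall g h v, act (gmul g h) v = act g (act h v).
Hypothesis G_topological : topological_group G.

Local Notation orbit := (Defs.orbit act).

Lemma continuous_lmul (h : G) : continuous (gmul h).
Proof.
move=> g; have [mul_cont _] := G_topological.
have pair_cvg : (h, y) @[y --> g] --> (h, g).
  by apply: cvg_pair; [exact: cvg_cst | exact: cvg_id].
exact: cvg_comp pair_cvg (mul_cont (h, g)).
Qed.

Lemma act_fiber_preimage (h : G) a :
  [set g | act g a = act h a] = gmul (ginv h) @^-1` [set g | act g a = a].
Proof.
apply/seteqP; split => g /=; first by rewrite actM => ->; rewrite actVK.
by move=> ga; rewrite -{1}(mulVKg h g) actM ga.
Qed.

Lemma act_fiber_image (h : G) a :
  [set g | act g a = act h a] = gmul h @` [set g | act g a = a].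
Proof.
apply/seteqP; split => [g gah | _ [g ga <-]] /=; last by rewrite actM ga.
by exists (gmul (ginv h) g); rewrite /= ?mulVKg // actM gah actVK.
Qed.

Lemma orbit_closure (A : set G) :
  (forall a, open [set g | act g a = a]) -> orbit (closure A) = orbit A.
Proof.
move=> stab_open; apply/funext => a; apply/seteqP.
split => _ [h Ah <-]; last by exists h => //; exact: subset_closure.
have : nbhs h [set g | act g a = act h a].
  apply: open_nbhs_nbhs; split => //; rewrite act_fiber_preimage.
  by apply: open_comp => [g _ |]; [exact: continuous_lmul | exact: stab_open].
by move=> /Ah[g [Ag gah]]; exists g.
Qed.

Lemma orbit_bigcap_chain (C : set (set G)) a b :
  (forall a, compact [set g | act g a = a]) ->
  C !=set0 -> (forall N, C N -> closed N) ->
  (forall N M, C N -> C M -> N `<=` M \/ M `<=` N) ->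
  (forall N, C N -> orbit N a b) -> orbit (\bigcap_(N in C) N) a b.
Proof.
move=> stab_compact C_neq0 C_closed C_chain orbit_ab.
have [N0 CN0] := C_neq0; have [h _ hab] := orbit_ab N0 CN0.
have fiber_compact : compact [set g | act g a = b].
  rewrite -hab act_fiber_image; apply: continuous_compact => //.
  by apply: continuous_subspaceT; exact: continuous_lmul.
have [|g [gab Cg]] :=
    compact_meets_bigcap_chain fiber_compact C_neq0 C_closed C_chain.
  by move=> N /orbit_ab[g Ng gab]; exists g.
by exists g.
Qed.

End ContinuousAction.

Theorem mainTheorem14 (G : topGroupCarrierType) (V : Type)
    (adj : V -> V -> Prop) (act : G -> V -> V) (C : set (set G)) :
  tdlc G -> compactly_generated G -> cayley_abels adj act ->
  C !=set0 ->
  (forall N, C N -> closed_normal N) ->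
  (forall N M, C N -> C M -> N `<=` M \/ M `<=` N) ->
  forall v : V,
  (let H := closure (\bigcup_(N in C) N) in
   (exists2 N, C N & qval adj act H v = qval adj act N v) /\
   (forall N, C N -> (qval adj act H v <= qval adj act N v)%N)) /\
  (let H' := \bigcap_(N in C) N in
   (exists2 N, C N & qval adj act H' v = qval adj act N v) /\
   (forall N, C N -> (qval adj act N v <= qval adj act H' v)%N)).
Proof.
move=> [G_top _ _ _] _ [_ adj_finite _ [act1 [actM adj_act]] [_ stab]].
move=> C_neq0 C_normal C_chain v.
have C_subgroup N : C N -> is_subgroup N by move=> /C_normal[[]].
have C_closed N : C N -> closed N by move=> /C_normal[].
have U_subgroup : is_subgroup (\bigcup_(N in C) N).
  exact: is_subgroup_bigcup_chain.
have K_subgroup : is_subgroup (\bigcap_(N in C) N) by exact: is_subgroup_bigcap.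
split=> [H | K].
- have -> : qval adj act H v = qval adj act (\bigcup_(N in C) N) v.
    by apply: qval_orbit_ext; apply: orbit_closure => // a; have [] := stab a.
  split; first exact: qval_bigcup_chain.
  move=> N CN; apply: qval_antimono => //; first exact: C_subgroup.
  exact: bigcup_sup.
- split; last first.
    move=> N CN; apply: qval_antimono => //; first exact: C_subgroup.
    exact: bigcap_inf.
  apply: qval_bigcap_chain => // a b; apply: orbit_bigcap_chain => // a'.
  by have [] := stab a'.
Qed.
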